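(* Let $r\geq 1$ be an integer and $\varepsilon,\delta\in(0,1)$. Let $\mathcal{H}$ be an $r$-partite $r$-uniform hypergraph with $n$ vertices and $r$-partition $V(\mathcal{H})=V_1\cup\dots\cup V_r$, and suppose $\mathcal{H}$ is not $(\varepsilon,\delta)$-superspread. Then there exists an index $i\in[r]$ such that $e(\mathcal{H}_{[r]\setminus\{i\}})\geq \frac{\varepsilon\delta}{r2^r}e(\mathcal{H})$.
   Context: An $r$-partite $r$-uniform hypergraph with $r$-partition $V_1\cup\dots\cup V_r$ is one in which every edge contains exactly one vertex from each $V_i$. For $I\subseteq[r]$, the restriction $\mathcal{H}_I$ is the hypergraph with vertex set $V_I=\bigcup_{i\in I}V_i$ and edge set $\{e\cap V_I: e\in E(\mathcal{H})\}$ (a set, so repeated intersections are counted once). For $S\subseteq V(\mathcal{H})$, $\deg_{\mathcal{H}}(S)=|\{e\in E(\mathcal{H}): S\subseteq e\}|$. An edge $e$ is $\delta$-heavy if there exist $S\subseteq e$ and $v\in e\setminus S$ with $\deg_{\mathcal{H}}(S\cup\{v\})\geq\delta\deg_{\mathcal{H}}(S)$. $\mathcal{H}$ is $(\varepsilon,\delta)$-superspread if at most $\varepsilon\,e(\mathcal{H})$ of its edges are $\delta$-heavy. *)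

From mathcomp Require Import all_boot all_order all_algebra.
Set Implicit Arguments. Unset Strict Implicit. Unset Printing Implicit Defensive.
Import Order.TTheory GRing.Theory Num.Theory.
Local Open Scope ring_scope.

(* An r-partite r-uniform hypergraph on a finite vertex type V:
   [part : V -> 'I_r] gives the r-partition V = V_0 u ... u V_{r-1}
   (V_i = [set v | part v == i]); [E : {set {set V}}] is the edge set. *)

Definition rpartite_uniform (V : finType) (r : nat) (part : V -> 'I_r)
  (E : {set {set V}}) : Prop :=
  forall e, e \in E -> forall i : 'I_r, #|[set v in e | part v == i]| = 1.

Definition partset (V : finType) (r : nat) (part : V -> 'I_r) (I : {set 'I_r})
  : {set V} := [set v | part v \in I].

Definition restrict_edges (V : finType) (r : nat) (part : V -> 'I_r)
  (E : {set {set V}}) (I : {set 'I_r}) : {set {set V}} :=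
  [set e :&: partset part I | e in E].

Definition deg (V : finType) (E : {set {set V}}) (S : {set V}) : nat :=
  #|[set e in E | S \subset e]|.

Definition heavy (R : realFieldType) (V : finType) (E : {set {set V}})
  (delta : R) (e : {set V}) : bool :=
  [exists S : {set V}, [exists v : V,
    [&& S \subset e, v \in e :\: S &
        delta * (deg E S)%:R <= (deg E (v |: S))%:R]]].

Definition superspread (R : realFieldType) (V : finType) (E : {set {set V}})
  (eps delta : R) : Prop :=
  (#|[set e in E | heavy E delta e]|%:R <= eps * #|E|%:R).

From mathcomp Require Import all_boot all_order all_algebra.
Set Implicit Arguments. Unset Strict Implicit. Unset Printing Implicit Defensive.
Import Order.TTheory GRing.Theory Num.Theory.
Local Open Scope ring_scope.

(* A heavy edge e has a witness (S, v) with delta deg S <= deg (S u {v}).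
   Its type (the parts met by S, the part of v) takes at most r 2^r values, so
   some type (I, j) is shared by more than eps e(H) / (r 2^r) heavy edges.  The
   edges of this class with witness set S all contain S, so there are at most
   deg S <= deg (S u {v}) / delta of them.  An edge containing S u {v} is
   determined by its trace outside V_j (its vertex in V_j is v), and this trace
   meets V_I exactly in S; so the traces obtained from distinct S are distinct,
   and delta times the size of the class is at most e(H_([r] \ {j})). *)

Lemma card_fibers (T U : finType) (X : {set T}) (g : T -> U) :
  #|X| = (\sum_(u : U) #|[set x in X | g x == u]|)%N.
Proof.
rewrite -sum1_card (partition_big g predT) //=.
by apply: eq_bigr => u _; rewrite -sum1_card; apply: eq_bigl => x; rewrite inE.
Qed.

Lemma exists_large_fiber (T U : finType) (u0 : U) (X : {set T}) (g : T -> U) :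
  exists u, (#|X| <= #|U| * #|[set x in X | g x == u]|)%N.
Proof.
pose f u := #|[set x in X | g x == u]|.
exists [arg max_(u > u0) f u]; case: arg_maxnP => // u _ fu_max.
by rewrite (card_fibers X g) -sum_nat_const; apply: leq_sum => w _; apply: fu_max.
Qed.

Lemma card_set_ord_prod (r : nat) : #|{: {set 'I_r} * 'I_r}| = (2 ^ r * r)%N.
Proof. by rewrite card_prod -cardsT -powersetT card_powerset cardsT card_ord. Qed.

Section PartiteEdges.

Variables (V : finType) (r : nat) (part : V -> 'I_r) (E : {set {set V}}).
Hypothesis E_partite : rpartite_uniform part E.

Lemma edge_part_inj e : e \in E -> {in e &, injective part}.
Proof.
move=> eE x y xe ye pxy.
have /eqP/cards1P[z ez] := E_partite eE (part x).
have : x \in [set w in e | part w == part x] by rewrite inE xe eqxx.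
have : y \in [set w in e | part w == part x] by rewrite inE ye pxy eqxx.
by rewrite ez !inE => /eqP-> /eqP->.
Qed.

Lemma edge_cap_partset e (S : {set V}) :
  e \in E -> S \subset e -> e :&: partset part (part @: S) = S.
Proof.
move=> eE /subsetP Se; apply/setP => x; rewrite !inE.
apply/andP/idP => [[xe /imsetP[s sS pxs]]|xS]; last by rewrite Se ?imset_f.
by rewrite (edge_part_inj eE xe (Se s sS) pxs).
Qed.

Lemma trace_off_part_inj v :
  {in [set f in E | v \in f] &,
    injective (fun f => f :&: partset part (~: [set part v]))}.
Proof.
suff sub (g1 g2 : {set V}) : g1 \in E -> v \in g1 -> v \in g2 ->
    g1 :&: partset part (~: [set part v]) = g2 :&: partset part (~: [set part v]) ->
    g1 \subset g2.
  move=> f1 f2; rewrite !inE => /andP[f1E vf1] /andP[f2E vf2] eq_tr.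
  by apply/eqP; rewrite eqEsubset (sub f1 f2) ?(sub f2 f1).
move=> g1E vg1 vg2 eq_tr; apply/subsetP => x xg1.
have [pxv|pxv] := eqVneq (part x) (part v).
  by rewrite (edge_part_inj g1E xg1 vg1 pxv).
have : x \in g1 :&: partset part (~: [set part v]) by rewrite !inE xg1 pxv.
by rewrite eq_tr inE => /andP[].
Qed.

Lemma deg_le_card_traces (S : {set V}) v : v \notin S ->
  (deg E (v |: S) <=
   #|[set p in restrict_edges part E (~: [set part v])
        | p :&: partset part (part @: S) == S]|)%N.
Proof.
move=> vNS; set W := partset part (~: [set part v]).
have star_sub : [set f in E | v |: S \subset f] \subset [set f in E | v \in f].
  by apply/subsetP => f; rewrite !inE subUset sub1set => /andP[-> /andP[-> _]].
rewrite /deg -(card_in_imset (sub_in2 (subsetP star_sub) (@trace_off_part_inj v))).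
apply/subset_leq_card/subsetP => _ /imsetP[f /[!inE] /andP[fE vSf] ->].
move: vSf; rewrite subUset sub1set => /andP[vf Sf].
have IW : partset part (part @: S) \subset W.
  apply/subsetP => x; rewrite !inE => /imsetP[s sS ->]; apply: contraNneq vNS.
  by move=> psv; rewrite -(edge_part_inj fE (subsetP Sf s sS) vf psv).
rewrite -/W; apply/andP; split; first exact: imset_f.
by rewrite -setIA [W :&: _]setIC (setIidPl IW) edge_cap_partset.
Qed.

End PartiteEdges.

Section HeavyEdgeTypes.

Variables (R : realFieldType) (V : finType) (r : nat) (part : V -> 'I_r).
Variables (E : {set {set V}}) (delta : R).
Hypothesis E_partite : rpartite_uniform part E.
Hypothesis delta_ge0 : 0 <= delta.

Definition heavy_witness (e : {set V}) : option ({set V} * V) :=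
  [pick p : {set V} * V | [&& p.1 \subset e, p.2 \in e :\: p.1
                            & delta * (deg E p.1)%:R <= (deg E (p.2 |: p.1))%:R]].

Definition witness_set (e : {set V}) : {set V} :=
  if heavy_witness e is Some p then p.1 else set0.

Definition witness_type (j0 : 'I_r) (e : {set V}) : {set 'I_r} * 'I_r :=
  if heavy_witness e is Some p then (part @: p.1, part p.2) else (set0, j0).

Definition heavy_edges : {set {set V}} := [set e in E | heavy E delta e].

Lemma heavy_witnessP e : e \in heavy_edges ->
  exists S v, heavy_witness e = Some (S, v) /\
    [&& S \subset e, v \in e :\: S & delta * (deg E S)%:R <= (deg E (v |: S))%:R].
Proof.
rewrite inE => /andP[_ /existsP[S /existsP[v Sv]]].
rewrite /heavy_witness; case: pickP => [[S' v'] Sv'|/(_ (S, v))]; last by rewrite Sv.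
by exists S', v'.
Qed.

Lemma witness_set_sub e : witness_set e \subset e.
Proof.
rewrite /witness_set /heavy_witness; case: pickP => [[S v] /and3P[] //|_].
exact: sub0set.
Qed.

Lemma heavy_type_class_le j0 I j :
  delta * #|[set e in heavy_edges | witness_type j0 e == (I, j)]|%:R
    <= #|restrict_edges part E (~: [set j])|%:R.
Proof.
rewrite (card_fibers _ witness_set).
rewrite (card_fibers _ (fun p => p :&: partset part I)) !natr_sum mulr_sumr.
apply: ler_sum => S _; set A := [set e in _ | _].
have [->|[e eA]] := set_0Vmem A; first by rewrite cards0 mulr0.
move: eA; rewrite inE => /andP[]; rewrite inE => /andP[e_heavy type_e] set_e.
have [S' [v [wit_e /and3P[_ /setDP[_ vNS] deg_v]]]] := heavy_witnessP e_heavy.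
move: type_e set_e; rewrite /witness_type /witness_set wit_e.
move=> /eqP[I_def j_def] /eqP /= S_def; subst I j S'.
have A_deg : (#|A| <= deg E S)%N.
  apply/subset_leq_card/subsetP => f; rewrite !inE.
  move=> /andP[/andP[/andP[fE _] _] /eqP <-].
  by rewrite fE witness_set_sub.
apply: (@le_trans _ _ (delta * (deg E S)%:R)); first by rewrite ler_wpM2l // ler_nat.
apply: le_trans deg_v _; rewrite ler_nat.
exact: deg_le_card_traces.
Qed.

End HeavyEdgeTypes.

Theorem lemma2p6 (R : realFieldType) (r n : nat) (eps delta : R)
  (V : finType) (part : V -> 'I_r) (E : {set {set V}}) :
  (1 <= r)%N -> 0 < eps < 1 -> 0 < delta < 1 ->
  #|V| = n ->
  rpartite_uniform part E ->
  ~ superspread E eps delta ->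
  exists i : 'I_r,
    eps * delta / (r%:R * 2 ^+ r) * #|E|%:R
      <= #|restrict_edges part E (~: [set i])|%:R.
Proof.
move=> r_gt0 _ /andP[delta_gt0 _] _ E_partite not_spread.
pose j0 : 'I_r := Ordinal r_gt0.
have [[I j] large_class] := exists_large_fiber (set0, j0)
  (heavy_edges E delta) (witness_type part E delta j0).
exists j.
set C := [set e in _ | _] in large_class.
have many_heavy : eps * #|E|%:R < #|heavy_edges E delta|%:R.
  by rewrite ltNge; apply/negP.
have N_gt0 : 0 < (r%:R * 2 ^+ r : R) by rewrite mulr_gt0 ?exprn_gt0 ?ltr0n.
have heavy_le : #|heavy_edges E delta|%:R <= r%:R * 2 ^+ r * (#|C|%:R : R).
  by rewrite -natrX -!natrM ler_nat (mulnC r) -card_set_ord_prod.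
apply: le_trans (heavy_type_class_le E_partite (ltW delta_gt0) j0 I j).
rewrite mulrAC ler_pdivrMr // [eps * delta]mulrC -!mulrA ler_wpM2l ?(ltW delta_gt0) //.
by apply: le_trans (ltW many_heavy) _; rewrite mulrC.
Qed.
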